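(* Let $\mathbb{A},\mathbb{B}$ be real square matrices of the same size such that $\mathbb{A}^{s}=\frac{1}{2}(\mathbb{A}+\mathbb{A}^{\dagger})$ is positive definite and $\mathbb{B}$ is a non-singular symmetric matrix with exactly one negative eigenvalue. Then $\mathbb{A}\mathbb{B}$ is invertible and has exactly one negative eigenvalue, and the geometric multiplicity of that eigenvalue is $1$.
   Context: $\mathbb{M}^{\dagger}$ denotes the transpose of $\mathbb{M}$. *)

From HB Require Import structures.
From mathcomp Require Import all_boot all_order all_algebra.
From mathcomp Require Import reals.
Set Implicit Arguments. Unset Strict Implicit. Unset Printing Implicit Defensive.
Import Order.TTheory GRing.Theory Num.Theory.
Local Open Scope ring_scope.

Definition sympart (R : realType) (n : nat) (A : 'M[R]_n) : 'M[R]_n :=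
  2^-1 *: (A + A^T).

Definition posdef (R : realType) (n : nat) (M : 'M[R]_n) : Prop :=
  M^T = M /\ forall x : 'cV[R]_n, x != 0 -> 0 < (x^T *m M *m x) 0 0.

(* M has exactly one negative (real) eigenvalue, counted with algebraic
   multiplicity: there is a unique negative eigenvalue and it is a simple root
   of the characteristic polynomial. *)
Definition one_neg_eig_alg (R : realType) (n : nat) (M : 'M[R]_n) : Prop :=
  exists l : R, [/\ l < 0, eigenvalue M l, mup l (char_poly M) = 1%N &
    forall m : R, m < 0 -> eigenvalue M m -> m = l].

From HB Require Import structures.
From mathcomp Require Import all_boot all_order all_algebra.
From mathcomp Require Import reals.
From mathcomp Require Import polyrcf complex spectral sesquilinear.
From mathcomp Require Import ring lra.
Import Order.TTheory GRing.Theory Num.Theory.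

(* Positivity of the symmetric part of A gives det A > 0, and the single simple
   negative eigenvalue of B gives det B < 0, so det (A B) < 0 and A B has a
   negative eigenvalue.  If x1, x2 were independent left eigenvectors of A B
   with negative eigenvalues, the quadratic form of B would be negative definite
   on the plane spanned by x1 A and x2 A: for x = a x1 + b x2 its value is
   controlled by the (positive) values of the form of A at x and at x A B.  But
   by the spectral theorem B has a single negative direction, so every plane
   contains a nonzero vector on which B is nonnegative.  This excludes both a
   second negative eigenvalue and a second independent eigenvector. *)

Set Implicit Arguments. Unset Strict Implicit. Unset Printing Implicit Defensive.
Local Open Scope ring_scope.

Section BilinearForm.
Context {R : comPzRingType} {n : nat}.
Implicit Types (M : 'M[R]_n) (u v z : 'rV[R]_n).

Definition mxform M u v : R := (u *m M *m v^T) 0 0.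

Lemma mxformT M u v : mxform M u v = mxform M^T v u.
Proof.
by rewrite /mxform -[in RHS](trmxK v) -!trmx_mul [RHS]mxE mulmxA.
Qed.

Lemma mxformDl M u1 u2 v :
  mxform M (u1 + u2) v = mxform M u1 v + mxform M u2 v.
Proof. by rewrite /mxform !mulmxDl mxE. Qed.

Lemma mxformZl M a u v : mxform M (a *: u) v = a * mxform M u v.
Proof. by rewrite /mxform -!scalemxAl mxE. Qed.

Lemma mxformDr M u v1 v2 :
  mxform M u (v1 + v2) = mxform M u v1 + mxform M u v2.
Proof. by rewrite /mxform linearD mulmxDr mxE. Qed.

Lemma mxformZr M a u v : mxform M u (a *: v) = a * mxform M u v.
Proof. by rewrite /mxform linearZ -scalemxAr mxE. Qed.

Lemma mxform_mulmxr (A B : 'M[R]_n) u z :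
  mxform B u (z *m A) = mxform A z (u *m B).
Proof. by rewrite mxformT /mxform trmx_mul !mulmxA. Qed.

End BilinearForm.

Definition lin_indep2 {F : fieldType} {n} (u v : 'rV[F]_n) : Prop :=
  forall a b : F, a *: u + b *: v = 0 -> a = 0 /\ b = 0.

Section Eigenvectors.
Context {F : fieldType} {n : nat}.
Implicit Types (M : 'M[F]_n) (u v x : 'rV[F]_n).

Lemma unitmx_eigenvalue0 M : (M \in unitmx) = ~~ eigenvalue M 0.
Proof.
by rewrite /eigenvalue /eigenspace raddf0 subr0 kermx_eq0 row_free_unit negbK.
Qed.

Lemma lin_indep2_notin_span u v : u != 0 -> ~~ (v <= u)%MS -> lin_indep2 u v.
Proof.
move=> u0 /negP vu a b eq0; have [b0|bn0] := eqVneq b 0.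
  move: eq0; rewrite b0 scale0r addr0 => /eqP; rewrite scalemx_eq0 (negPf u0).
  by rewrite orbF => /eqP.
exfalso; apply/vu/sub_rVP; exists (- (b^-1 * a)).
move/eqP: eq0; rewrite addrC addr_eq0 => /eqP/(congr1 (fun w => b^-1 *: w)).
by rewrite scalerA mulVf // scale1r scalerN scalerA scaleNr.
Qed.

Lemma eigenvectors_notin_span M x1 x2 l1 l2 :
  x1 *m M = l1 *: x1 -> x2 *m M = l2 *: x2 -> x2 != 0 -> l1 != l2 ->
  ~~ (x2 <= x1)%MS.
Proof.
move=> e1 e2 x20 l12; apply/sub_rVP => -[c x2E].
have : (l1 - l2) *: x2 = 0.
  by rewrite scalerBl -e2 x2E -scalemxAl e1 !scalerA mulrC subrr.
by move/eqP; rewrite scalemx_eq0 subr_eq0 (negPf l12) (negPf x20).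
Qed.

Lemma eigenspace_notin_span M l x1 : (1 < \rank (eigenspace M l))%N ->
  exists2 x2 : 'rV_n, x2 *m M = l *: x2 & ~~ (x2 <= x1)%MS.
Proof.
move=> r2; have : ~~ (eigenspace M l <= x1)%MS.
  by apply/negP => /mxrankS; rewrite leqNgt (leq_ltn_trans (rank_leq_row x1)).
case/row_subPn => i ni; exists (row i (eigenspace M l)) => //.
exact/eigenspaceP/row_sub.
Qed.

End Eigenvectors.

Section PositiveForm.
Context {R : realFieldType} {n : nat}.

Definition posform (A : 'M[R]_n) : Prop :=
  forall v : 'rV_n, v != 0 -> 0 < mxform A v v.

Lemma posform_no_nonpos_eigenvalue (A : 'M[R]_n) x :
  posform A -> x <= 0 -> ~~ eigenvalue A x.
Proof.
move=> posA x0; apply/eigenvalueP => -[v vA /posA].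
rewrite /mxform vA -scalemxAl mxE ltNge mulr_le0_ge0 //.
by rewrite mxE; apply: sumr_ge0 => i _; rewrite mxE -expr2 sqr_ge0.
Qed.

Lemma posform_unitmx (A : 'M[R]_n) : posform A -> A \in unitmx.
Proof.
by move=> posA; rewrite unitmx_eigenvalue0 posform_no_nonpos_eigenvalue.
Qed.

End PositiveForm.

Lemma posdef_sympart_posform (R : realType) n (A : 'M[R]_n) :
  posdef (sympart A) -> posform A.
Proof.
case=> _ posS v v0; have := posS v^T; rewrite trmx_eq0 => /(_ v0).
rewrite trmxK /sympart -scalemxAr -scalemxAl mxE mulmxDr mulmxDl mxE.
have -> : (v *m A^T *m v^T) 0 0 = mxform A v v.
  by rewrite -[LHS]/(mxform A^T v v) mxformT trmxK.
rewrite -/(mxform A v v); lra.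
Qed.

Lemma mup1_factor {F : fieldType} (p : {poly F}) x :
  p != 0 -> mup x p = 1%N -> exists2 q, p = q * ('X - x%:P) & ~~ root q x.
Proof.
move=> p0; have [m [q]] := multiplicity_XsubC p x; rewrite p0 /= => qx pE.
by rewrite pE mupMr // mup_XsubCX eqxx => ->; exists q; rewrite ?expr1.
Qed.

Section DeterminantSign.
Context {R : rcfType} {n : nat}.
Implicit Types (M : 'M[R]_n) (p : {poly R}).

Lemma sgr_horner0_noroot p : (forall x, x <= 0 -> ~~ root p x) ->
  Num.sg p.[0] = Num.sg ((-1) ^+ (size p).-1 * lead_coef p).
Proof.
by move=> noroot; apply: (@sgp_minftyP _ 0) => [x|]; rewrite in_itv //= => /noroot.
Qed.

Lemma sgr_char_poly0 M :
  Num.sg (char_poly M).[0] = (-1) ^+ n * Num.sg (\det M).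
Proof. by rewrite horner_coef0 char_poly_det sgrM sgrX sgrN1. Qed.

Lemma det_gt0_no_nonpos_eigenvalue M :
  (forall x, x <= 0 -> ~~ eigenvalue M x) -> 0 < \det M.
Proof.
move=> noeig.
have /sgr_horner0_noroot : forall x, x <= 0 -> ~~ root (char_poly M) x.
  by move=> x; rewrite -eigenvalue_root_char; apply: noeig.
rewrite sgr_char_poly0 size_char_poly (monicP (char_poly_monic M)) mulr1 /=.
rewrite sgrX sgrN1 -[RHS]mulr1 => /(mulfI (negbT (signr_eq0 _ _))) /eqP.
by rewrite sgr_cp0.
Qed.

Lemma det_lt0_neg_eigenvalue M :
  \det M < 0 -> exists2 l, l < 0 & eigenvalue M l.
Proof.
move=> det0; set p := char_poly M; set b := cauchy_bound p.
have p0 : p != 0 by rewrite monic_neq0 ?char_poly_monic.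
have sgb : Num.sg p.[- b] = (-1) ^+ n.
  rewrite (sgp_minftyP (le_cauchy_bound p0)) ?in_itv /= ?lexx //.
  rewrite /sgp_minfty size_char_poly (monicP (char_poly_monic M)) mulr1.
  by rewrite sgrX sgrN1.
have b0 : - b <= 0 by rewrite oppr_le0 cauchy_bound_ge0.
have : p.[- b] * p.[0] < 0.
  by rewrite -sgr_cp0 sgrM sgb sgr_char_poly0 mulrA -expr2 sqrr_sign mul1r sgr_cp0.
case/(poly_ivtoo b0) => l.
by rewrite in_itv /= => /andP[_ l0] rl; exists l; rewrite // eigenvalue_root_char.
Qed.

Lemma det_lt0_simple_neg_eigenvalue M l :
  M \in unitmx -> l < 0 -> mup l (char_poly M) = 1%N ->
  (forall m, m < 0 -> eigenvalue M m -> m = l) -> \det M < 0.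
Proof.
move=> Mu l0 ml l_uniq; have pmonic := char_poly_monic M.
have [q pE ql] := mup1_factor (monic_neq0 pmonic) ml.
have q_noroot x : x <= 0 -> ~~ root q x.
  move=> x0; apply/negP => qx.
  have Mx : eigenvalue M x by rewrite eigenvalue_root_char pE rootM qx.
  have [x_eq0 | x_neq0] := eqVneq x 0.
    by move: Mu; rewrite unitmx_eigenvalue0 -x_eq0 Mx.
  by move: qx; rewrite (l_uniq x) ?(negPf ql) // lt_neqAle x_neq0.
have q0 : q != 0 by apply: contraNneq ql => ->; rewrite root0.
have size_q : size q = n.
  move: (size_char_poly M).
  by rewrite pE size_Mmonic ?monicXsubC ?size_XsubC ?addn2 => // -[].
have lead_q : lead_coef q = 1.
  by move/monicP: pmonic; rewrite pE lead_coef_Mmonic ?monicXsubC.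
have n_gt0 : (0 < n)%N by rewrite -size_q size_poly_gt0.
have := congr1 (fun p => Num.sg p.[0]) pE.
rewrite /= sgr_char_poly0 hornerM hornerXsubC sub0r sgrM.
rewrite (sgr_horner0_noroot q_noroot).
rewrite size_q lead_q mulr1 sgrX sgrN1 (@gtr0_sg _ (- l)) ?oppr_gt0 //.
rewrite -[in (-1) ^+ n](prednK n_gt0) exprS.
rewrite mulN1r mulNr -mulrN => /(mulfI (negbT (signr_eq0 _ _))) /eqP.
by rewrite eqr_oppLR sgr_cp0.
Qed.

End DeterminantSign.

Definition negdef_plane {R : numDomainType} {n} (B : 'M[R]_n)
    (y1 y2 : 'rV[R]_n) : Prop :=
  forall a b : R, (a != 0) || (b != 0) ->
    mxform B (a *: y1 + b *: y2) (a *: y1 + b *: y2) < 0.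

Lemma negdef_plane_le0 {R : numDomainType} {n} (B : 'M[R]_n) y1 y2 :
  negdef_plane B y1 y2 ->
  forall a b, mxform B (a *: y1 + b *: y2) (a *: y1 + b *: y2) <= 0.
Proof.
move=> neg a b; have [ab | ] := boolP ((a != 0) || (b != 0)); first exact/ltW/neg.
rewrite negb_or !negbK => /andP[/eqP-> /eqP->].
by rewrite !scale0r addr0 /mxform !mul0mx mxE.
Qed.

(* Scalar core of [neg_eigenvectors_negdef_plane], with [pij] standing for
   [mxform A xi xj]. *)
Lemma eigen_combination_form_lt0 (R : realFieldType)
    (l1 l2 a b p11 p12 p21 p22 : R) :
  l1 < 0 -> l2 < 0 -> l1 * p21 = l2 * p12 ->
  0 < a * (a * p11 + b * p12) + b * (a * p21 + b * p22) ->
  0 < l1 * a * (l1 * a * p11 + l2 * b * p12) +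
      l2 * b * (l1 * a * p21 + l2 * b * p22) ->
  a * (a * (l1 * p11) + b * (l1 * p21)) + b * (a * (l2 * p12) + b * (l2 * p22)) < 0.
Proof.
move=> l1_lt0 l2_lt0 sym Qab Qlab.
set G := _ + _.
have l12_gt0 : 0 < l1 * l2 by rewrite nmulr_rgt0.
have : 0 < (l1 + l2) * G.
  have -> : (l1 + l2) * G =
      l1 * a * (l1 * a * p11 + l2 * b * p12) + l2 * b * (l1 * a * p21 + l2 * b * p22)
      + l1 * l2 * (a * (a * p11 + b * p12) + b * (a * p21 + b * p22))
      + a * b * (l1 - l2) * (l1 * p21 - l2 * p12) by rewrite /G; ring.
  by rewrite sym subrr mulr0 addr0 addr_gt0 // mulr_gt0.
by rewrite nmulr_rgt0 // ltr_nDl.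
Qed.

Lemma neg_eigenvectors_negdef_plane (R : realFieldType) n (A B : 'M[R]_n)
    (x1 x2 : 'rV_n) (l1 l2 : R) :
  posform A -> B^T = B -> l1 < 0 -> l2 < 0 ->
  x1 *m (A *m B) = l1 *: x1 -> x2 *m (A *m B) = l2 *: x2 ->
  lin_indep2 x1 x2 -> negdef_plane B (x1 *m A) (x2 *m A).
Proof.
move=> posA Bs l1_lt0 l2_lt0 e1 e2 indep a b ab.
have formB (u z : 'rV_n) l : u *m (A *m B) = l *: u ->
    mxform B (u *m A) (z *m A) = l * mxform A z u.
  by move=> e; rewrite mxform_mulmxr -mulmxA e mxformZr.
have sym : l1 * mxform A x2 x1 = l2 * mxform A x1 x2.
  by rewrite -(formB _ _ _ e1) -(formB _ _ _ e2) mxformT Bs.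
have posA_comb (c d : R) : (c != 0) || (d != 0) ->
    0 < c * (c * mxform A x1 x1 + d * mxform A x1 x2) +
        d * (c * mxform A x2 x1 + d * mxform A x2 x2).
  move=> cd; have := posA (c *: x1 + d *: x2).
  rewrite !(mxformDl, mxformZl, mxformDr, mxformZr); apply.
  by apply: contraTneq cd => /indep[-> ->]; rewrite eqxx.
rewrite !(mxformDl, mxformZl, mxformDr, mxformZr).
rewrite !(formB _ _ _ e1, formB _ _ _ e2).
apply: eigen_combination_form_lt0 sym (posA_comb _ _ ab) (posA_comb _ _ _) => //.
by rewrite !mulf_eq0 (lt_eqF l1_lt0) (lt_eqF l2_lt0).
Qed.

Lemma char_poly_similar (F : fieldType) n (P D : 'M[F]_n) : P \in unitmx ->
  char_poly (invmx P *m D *m P) = char_poly D.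
Proof.
move=> Pu; rewrite /char_poly /char_poly_mx.
have -> : 'X%:M - map_mx polyC (invmx P *m D *m P) =
    map_mx polyC (invmx P) *m ('X%:M - map_mx polyC D) *m map_mx polyC P.
  rewrite !map_mxM mulmxBr mulmxBl; congr (_ - _).
  by rewrite mul_mx_scalar -scalemxAl -map_mxM mulVmx // map_mx1 scalemx1.
rewrite !det_mulmx !det_map_mx mulrC mulrA -rmorphM -det_mulmx mulmxV //.
by rewrite det1 rmorph1 mul1r.
Qed.

Section HermitianForm.
Context {C : numClosedFieldType} {n : nat}.
Local Open Scope sesquilinear_scope.

Definition hform (M : 'M[C]_n) (z : 'rV[C]_n) : C :=
  mxform M z (map_mx Num.conj z).

Lemma hform_spectral (P : 'M[C]_n) (d z : 'rV[C]_n) : P \is unitarymx ->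
  hform (invmx P *m diag_mx d *m P) z =
  \sum_k d 0 k * ((z *m P ^t*) 0 k * ((z *m P ^t*) 0 k)^*).
Proof.
move=> Pu; rewrite /hform /mxform map_trmx invmx_unitary //.
have -> : z *m (P ^t* *m diag_mx d *m P) *m z ^t* =
    z *m P ^t* *m diag_mx d *m (z *m P ^t*) ^t*.
  by rewrite trmx_mul map_mxM trmxCK !mulmxA.
by rewrite mxE; apply: eq_bigr => k _; rewrite mul_mx_diag !mxE mulrAC mulrC.
Qed.

(* At most one diagonal entry is negative: pick the combination whose
   coordinate at that entry vanishes. *)
Lemma hform_ge0_combination (P : 'M[C]_n) (d y1 y2 : 'rV[C]_n) :
  P \is unitarymx -> (forall k, d 0 k \is Num.real) ->
  (forall k k', d 0 k < 0 -> d 0 k' < 0 -> k = k') ->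
  exists a b : C, ((a != 0) || (b != 0)) /\
    0 <= hform (invmx P *m diag_mx d *m P) (a *: y1 + b *: y2).
Proof.
move=> Pu d_real d_neg_uniq; pose coord k (z : 'rV[C]_n) := (z *m P ^t*) 0 k.
have coord_comb k a b z1 z2 :
    coord k (a *: z1 + b *: z2) = a * coord k z1 + b * coord k z2.
  by rewrite /coord mulmxDl -!scalemxAl !mxE.
have hform_ge0 z : (forall k, d 0 k < 0 -> coord k z = 0) ->
    0 <= hform (invmx P *m diag_mx d *m P) z.
  move=> z_neg; rewrite hform_spectral //; apply: sumr_ge0 => k _.
  have [dk_lt0 | dk_ge0] := boolP (d 0 k < 0).
    by rewrite -/(coord k z) z_neg // mul0r mulr0.
  by rewrite mulr_ge0 ?mul_conjC_ge0 // real_leNgt ?real0.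
case: (pickP (fun k => d 0 k < 0)) => [k0 dk0_lt0 | no_neg]; last first.
  exists 1, 0; rewrite oner_neq0; split=> //.
  by apply: hform_ge0 => k; rewrite no_neg.
have [y1_0 | y1_n0] := eqVneq (coord k0 y1) 0.
  exists 1, 0; rewrite oner_neq0; split=> //; apply: hform_ge0 => k dk_lt0.
  by rewrite (d_neg_uniq _ _ dk_lt0 dk0_lt0) coord_comb y1_0 !mulr0 mul0r addr0.
exists (coord k0 y2), (- coord k0 y1); rewrite oppr_eq0 y1_n0 orbT; split=> //.
apply: hform_ge0 => k dk_lt0; rewrite (d_neg_uniq _ _ dk_lt0 dk0_lt0) coord_comb.
by rewrite mulNr [coord k0 y2 * _]mulrC subrr.
Qed.

End HermitianForm.

Section RealSymmetric.
Context {R : rcfType} {n : nat}.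
Local Notation toC := (real_complex R).
Implicit Types (B : 'M[R]_n) (r s y : 'rV[R]_n).

Lemma map_real_complex_conj p q (M : 'M[R]_(p, q)) :
  map_mx Num.conj (map_mx toC M) = map_mx toC M.
Proof.
by apply/matrixP => i j; rewrite !mxE conj_Creal //; apply/complex_realP; exists (M i j).
Qed.

Lemma sym_hermsymmx B : B^T = B -> map_mx toC B \is hermsymmx.
Proof.
move=> Bs; apply/is_hermitianmxP; rewrite expr0 scale1r.
by rewrite map_trmx Bs map_real_complex_conj.
Qed.

Lemma spectral_diag_neg_uniq B l : B^T = B -> mup l (char_poly B) = 1%N ->
  (forall m, m < 0 -> eigenvalue B m -> m = l) ->
  forall k k', spectral_diag (map_mx toC B) 0 k < 0 ->
    spectral_diag (map_mx toC B) 0 k' < 0 -> k = k'.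
Proof.
move=> Bs ml l_uniq; set BC := map_mx toC B; set d := spectral_diag BC.
have hBC : BC \is hermsymmx := sym_hermsymmx Bs.
have char_BC : char_poly BC = \prod_(k < n) ('X - (d 0 k)%:P).
  rewrite [in LHS](orthomx_spectralP (hermitian_normalmx hBC)).
  rewrite char_poly_similar ?spectral_unit // char_poly_trig ?diag_mx_is_trig //.
  by apply: eq_bigr => k _; rewrite mxE eqxx mulr1n.
have d_neg k : d 0 k < 0 -> d 0 k = toC l.
  have /complex_realP[r dk] := mxOverP (hermitian_spectral_diag_real hBC) 0 k.
  rewrite dk -[0]/(toC 0) ltcR => r_lt0; rewrite (l_uniq r) // -(eigenvalue_map toC).
  rewrite eigenvalue_root_char char_BC /root horner_prod; apply/prodf_eq0.
  by exists k; rewrite // hornerXsubC dk subrr.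
move=> k k' dk_lt0 dk'_lt0; apply/eqP; apply: contraT => kk'.
have : ('X - (toC l)%:P) ^+ 2 %| char_poly BC.
  rewrite char_BC (bigD1 k) // (bigD1 k') 1?eq_sym //= mulrA.
  by rewrite (d_neg k) // (d_neg k') // -expr2 dvdp_mulr.
rewrite -map_char_poly -map_polyXsubC -rmorphXn dvdp_map.
by rewrite -mup_geq ?ml ?monic_neq0 ?char_poly_monic.
Qed.

Lemma hform_real_imag B r s : B^T = B ->
  hform (map_mx toC B) (map_mx toC r + 'i *: map_mx toC s) =
  toC (mxform B r r + mxform B s s).
Proof.
move=> Bs; rewrite /hform.
have -> : map_mx Num.conj (map_mx toC r + 'i *: map_mx toC s) =
    map_mx toC r + (- 'i) *: map_mx toC s.
  by rewrite map_mxD map_mxZ /= conjCi !map_real_complex_conj.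
have mxformC u v :
    mxform (map_mx toC B) (map_mx toC u) (map_mx toC v) = toC (mxform B u v).
  by rewrite /mxform map_trmx -!map_mxM mxE.
rewrite !(mxformDl, mxformDr, mxformZl, mxformZr) !mxformC.
rewrite [mxform B s r]mxformT Bs.
by rewrite mulrA mulrN -expr2 sqrCi opprK mul1r mulNr addrA addrNK rmorphD.
Qed.

Lemma no_negdef_plane B l y1 y2 : B^T = B -> mup l (char_poly B) = 1%N ->
  (forall m, m < 0 -> eigenvalue B m -> m = l) -> ~ negdef_plane B y1 y2.
Proof.
move=> Bs ml l_uniq neg; set BC := map_mx toC B; have hBC := sym_hermsymmx Bs.
have [[a1 a2] [[b1 b2] [ab]]] := hform_ge0_combination
  (map_mx toC y1) (map_mx toC y2) (spectral_unitarymx BC)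
  (mxOverP (hermitian_spectral_diag_real hBC) 0) (spectral_diag_neg_uniq Bs ml l_uniq).
have -> : Complex a1 a2 *: map_mx toC y1 + Complex b1 b2 *: map_mx toC y2 =
    map_mx toC (a1 *: y1 + b1 *: y2) + 'i *: map_mx toC (a2 *: y1 + b2 *: y2).
  rewrite !map_mxD !map_mxZ [Complex a1 a2]complexE [Complex b1 b2]complexE /=.
  by rewrite complexiE !scalerDl !scalerDr -!scalerA addrACA.
rewrite -(orthomx_spectralP (hermitian_normalmx hBC)) hform_real_imag //.
rewrite -[0]/(toC 0) lecR.
have := negdef_plane_le0 neg a1 b1; have := negdef_plane_le0 neg a2 b2.
have [ab1 | ab1] := boolP ((a1 != 0) || (b1 != 0)); first by have := neg _ _ ab1; lra.
have ab2 : (a2 != 0) || (b2 != 0).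
  move: ab ab1; rewrite !eq_complex /=.
  by case: (a1 == 0); case: (a2 == 0); case: (b1 == 0); case: (b2 == 0).
by have := neg _ _ ab2; lra.
Qed.

End RealSymmetric.

Lemma neg_eigenvectors_dependent (R : rcfType) n (A B : 'M[R]_n) l
    (x1 x2 : 'rV_n) (l1 l2 : R) :
  posform A -> B^T = B -> mup l (char_poly B) = 1%N ->
  (forall m, m < 0 -> eigenvalue B m -> m = l) -> l1 < 0 -> l2 < 0 ->
  x1 *m (A *m B) = l1 *: x1 -> x2 *m (A *m B) = l2 *: x2 -> ~ lin_indep2 x1 x2.
Proof.
move=> posA Bs ml l_uniq l1_lt0 l2_lt0 e1 e2 indep.
apply: (no_negdef_plane Bs ml l_uniq).
exact: neg_eigenvectors_negdef_plane posA Bs l1_lt0 l2_lt0 e1 e2 indep.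
Qed.

Theorem lemma4p2 (R : realType) (n : nat) (A B : 'M[R]_n) :
  posdef (sympart A) ->
  B^T = B -> B \in unitmx -> one_neg_eig_alg B ->
  (A *m B) \in unitmx /\
  exists l : R, [/\ l < 0, eigenvalue (A *m B) l,
    (forall m : R, m < 0 -> eigenvalue (A *m B) m -> m = l) &
    \rank (eigenspace (A *m B) l) = 1%N].
Proof.
move=> /posdef_sympart_posform posA Bs Bu [l [l_lt0 _ ml l_uniq]].
split; first by rewrite unitmx_mul posform_unitmx.
have dep := neg_eigenvectors_dependent posA Bs ml l_uniq.
have detAB_lt0 : \det (A *m B) < 0.
  rewrite det_mulmx pmulr_rlt0 ?(det_lt0_simple_neg_eigenvalue Bu l_lt0 ml l_uniq) //.
  by apply: det_gt0_no_nonpos_eigenvalue => x; apply: posform_no_nonpos_eigenvalue.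
have [m m_lt0 em] := det_lt0_neg_eigenvalue detAB_lt0.
have [x1 e1 x1_neq0] := eigenvalueP em.
exists m; split=> //.
  move=> m' m'_lt0 /eigenvalueP[x2 e2 x2_neq0]; have [// | m'_neq_m] := eqVneq m' m.
  case: (dep _ _ _ _ m_lt0 m'_lt0 e1 e2); apply: lin_indep2_notin_span x1_neq0 _.
  by apply: eigenvectors_notin_span e1 e2 x2_neq0 _; rewrite eq_sym.
apply/anti_leq/andP; split; last by rewrite lt0n mxrank_eq0; exact: em.
rewrite leqNgt; apply/negP => /(eigenspace_notin_span x1)[x2 e2 x2_notin].
exact: (dep _ _ _ _ m_lt0 m_lt0 e1 e2 (lin_indep2_notin_span x1_neq0 x2_notin)).
Qed.
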